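(* Let $d\in\mathbb{N}$, let $A$ be a $d\times d$ reclusive matrix and $\mathcal{P}_{A}$ its reclusive partition. Then there exists a clique in $\mathcal{P}_{A}$ of size $d+1$, i.e., $d+1$ distinct members of $\mathcal{P}_A$ that are pairwise adjacent.
   Context: A $d\times d$ matrix $A=(a_{ij})$ is reclusive if $a_{ij}=0$ for $i>j$, $a_{ii}=1$ for all $i$, and $a_{ij}>a_{ik}>0$ for all $i\le j<k$. Its reclusive partition is $\mathcal{P}_A=\{A\vec{v}+[0,1)^d:\vec{v}\in\mathbb{Z}^d\}$. Two members $X,Y$ are adjacent if $\overline{X}\cap\overline{Y}\neq\emptyset$ (closures). *)

From HB Require Import structures.
From mathcomp Require Import all_boot all_order all_algebra.
From mathcomp Require Import all_classical all_reals all_analysis.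
Set Implicit Arguments. Unset Strict Implicit. Unset Printing Implicit Defensive.
Import Order.TTheory GRing.Theory Num.Theory.
Import numFieldNormedType.Exports.
Local Open Scope classical_set_scope.
Local Open Scope ring_scope.

Definition reclusive (R : realType) (d : nat) (A : 'M[R]_d) : Prop :=
  (forall i j : 'I_d, (j < i)%N -> A i j = 0) /\
  (forall i : 'I_d, A i i = 1) /\
  (forall i j k : 'I_d, (i <= j)%N -> (j < k)%N -> A i j > A i k /\ A i k > 0).

Definition rtile (R : realType) (d : nat) (A : 'M[R]_d) (v : 'cV[int]_d)
  : set 'cV[R]_d :=
  [set x | exists y : 'cV[R]_d,
     (forall i : 'I_d, 0 <= y i ord0 < 1) /\
     x = A *m map_mx (fun z : int => z%:~R) v + y].

Definition rpartition (R : realType) (d : nat) (A : 'M[R]_d) : set (set 'cV[R]_d) :=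
  [set X | exists v : 'cV[int]_d, X = rtile A v].

Definition radjacent (R : realType) (d : nat) (X Y : set 'cV[R]_d) : Prop :=
  closure X `&` closure Y !=set0.

From HB Require Import structures.
From mathcomp Require Import all_boot all_order all_algebra.
From mathcomp Require Import all_classical all_reals all_analysis.
From mathcomp Require Import ring lra.
Set Implicit Arguments. Unset Strict Implicit. Unset Printing Implicit Defensive.
Import Order.TTheory GRing.Theory Num.Theory.
Import numFieldNormedType.Exports.
Local Open Scope classical_set_scope.
Local Open Scope ring_scope.

(* Take the tile at the origin together with its translates by the d columns
   of A, i.e. v = 0, e_1, ..., e_d.  The columns are nonzero and pairwise
   distinct, because in row j the diagonal entry 1 exceeds every entry to its
   right, so these d + 1 tiles are distinct.  All entries of A lie in [0, 1],
   so any two corners A v, A w differ by at most 1 in every coordinate, and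
   then their coordinatewise maximum lies in both closures A v + [0, 1]^d and
   A w + [0, 1]^d. *)

Definition rcorner (R : realType) (d : nat) (A : 'M[R]_d) (v : 'cV[int]_d)
  : 'cV[R]_d := A *m map_mx (fun z : int => z%:~R) v.

Section Tiles.

Variables (R : realType) (d : nat) (A : 'M[R]_d).

Lemma rtileP v x :
  rtile A v x <->
  exists2 y : 'cV[R]_d, (forall i, 0 <= y i ord0 < 1) & x = rcorner A v + y.
Proof. by split=> [[y []]|[y]]; exists y. Qed.

Lemma rtile_rcorner v : rtile A v (rcorner A v).
Proof. by apply/rtileP; exists 0 => [i|]; rewrite ?mxE ?lexx ?ltr01 ?addr0. Qed.

Lemma rtile_inj v w : rtile A v = rtile A w -> rcorner A v = rcorner A w.
Proof.
move=> tile_vw.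
have /rtileP[y y_bnd ev] : rtile A w (rcorner A v) by rewrite -tile_vw; apply: rtile_rcorner.
have /rtileP[y' y'_bnd ew] : rtile A v (rcorner A w) by rewrite tile_vw; apply: rtile_rcorner.
apply/matrixP => i j; have -> : j = ord0 := ord1 j.
have := y_bnd i; have := y'_bnd i.
move/(congr1 (fun M : 'cV[R]_d => M i ord0)): ev.
move/(congr1 (fun M : 'cV[R]_d => M i ord0)): ew.
rewrite [(_ + y') _ _]mxE [(_ + y) _ _]mxE.
lra.
Qed.

Lemma closure_rtile v (x : 'cV[R]_d) :
  (forall i, 0 <= x i ord0 - rcorner A v i ord0 <= 1) -> closure (rtile A v) x.
Proof.
move=> x_bnd B /nbhs_ballP [e /= e_gt0 ball_sub].
pose t := Num.min (e / 2) (1 / 2).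
have t_gt0 : 0 < t by rewrite /t lt_min; apply/andP; split; lra.
have t_le : t <= 1 / 2 by rewrite /t ge_min; apply/orP; right; lra.
have t_lt : t < e by rewrite /t gt_min; apply/orP; left; lra.
exists (rcorner A v + (1 - t) *: (x - rcorner A v)); split.
  apply/rtileP; exists ((1 - t) *: (x - rcorner A v)) => // i.
  have := x_bnd i; move: (rcorner A v) => c; rewrite !mxE => /andP[? ?].
  by apply/andP; split; nra.
apply: ball_sub; split => // i j; have -> : j = ord0 := ord1 j.
have := x_bnd i; rewrite -ball_normE /ball_ /=; move: (rcorner A v) => c.
rewrite !mxE => /andP[? ?].
have -> : x i ord0 - (c i ord0 + (1 - t) * (x i ord0 - c i ord0))
          = t * (x i ord0 - c i ord0) by ring.
by rewrite normrM !ger0_norm ?(ltW t_gt0) //; nra.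
Qed.

Lemma rtile_adjacent v w :
  (forall i, `|rcorner A v i ord0 - rcorner A w i ord0| <= 1) ->
  radjacent (rtile A v) (rtile A w).
Proof.
move=> near_vw.
have max_sub_bnd (a b : R) : `|a - b| <= 1 -> 0 <= Num.max a b - a <= 1.
  by rewrite ler_norml => /andP[? ?]; case: (lerP a b) => ab; apply/andP; split; lra.
exists (\col_i Num.max (rcorner A v i ord0) (rcorner A w i ord0));
  split; apply: closure_rtile => i; rewrite mxE.
- exact: max_sub_bnd.
- by rewrite maxC; apply: max_sub_bnd; rewrite distrC.
Qed.

End Tiles.

Definition clique_vec (d : nat) (i : 'I_d.+1) : 'cV[int]_d :=
  if unlift ord0 i is Some j then delta_mx j ord0 else 0.

Lemma rcorner_clique_vec (R : realType) (d : nat) (A : 'M[R]_d) i :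
  rcorner A (clique_vec i) = if unlift ord0 i is Some j then col j A else 0.
Proof.
rewrite /rcorner /clique_vec; case: unlift => [j|].
  by rewrite (map_delta_mx intr) colE.
by rewrite map_mx0 mulmx0.
Qed.

Section ReclusiveClique.

Variables (R : realType) (d : nat) (A : 'M[R]_d).
Hypothesis rA : reclusive A.

Lemma reclusive_entry_bnd i j : 0 <= A i j <= 1.
Proof.
have [below [diag row]] := rA.
case: (ltngtP i j) => [ij|ji|/val_inj->]; last by rewrite diag lexx ler01.
- by have [] := row i i j (leqnn _) ij; rewrite diag => /ltW-> /ltW->.
- by rewrite below // lexx ler01.
Qed.

Lemma reclusive_col_neq0 j : col j A != 0.
Proof.
have [_ [diag _]] := rA.
by apply/eqP => /matrixP/(_ j ord0); rewrite !mxE diag => /eqP; rewrite oner_eq0.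
Qed.

Lemma reclusive_col_inj : injective (fun j => col j A).
Proof.
have [_ [diag row]] := rA.
have lt_col_neq (j k : 'I_d) : (j < k)%N -> col j A != col k A.
  move=> jk; apply/eqP => /matrixP/(_ j ord0); rewrite !mxE diag => A_jk.
  by have [] := row j j k (leqnn _) jk; rewrite diag -A_jk ltxx.
move=> j k col_jk; apply/val_inj.
by case: (ltngtP j k) => [/lt_col_neq | /lt_col_neq | //]; rewrite col_jk eqxx.
Qed.

Lemma rcorner_clique_vec_inj : injective (fun i : 'I_d.+1 => rcorner A (clique_vec i)).
Proof.
move=> i j; rewrite !rcorner_clique_vec.
case: (unliftP ord0 i) => [a ->|->]; case: (unliftP ord0 j) => [b ->|->] //.
- by move/reclusive_col_inj->.
- by move/eqP; rewrite (negPf (reclusive_col_neq0 a)).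
- by move/esym/eqP; rewrite (negPf (reclusive_col_neq0 b)).
Qed.

Lemma rcorner_clique_vec_bnd i k : 0 <= rcorner A (clique_vec i) k ord0 <= 1.
Proof.
rewrite rcorner_clique_vec; case: unlift => [j|]; rewrite mxE.
  exact: reclusive_entry_bnd.
by rewrite lexx ler01.
Qed.

End ReclusiveClique.

Theorem mainTheorem12 (R : realType) (d : nat) (A : 'M[R]_d) :
  reclusive A ->
  exists X : 'I_d.+1 -> set 'cV[R]_d,
    (forall i, rpartition A (X i)) /\
    (forall i j, i != j -> X i <> X j) /\
    (forall i j, i != j -> radjacent (X i) (X j)).
Proof.
move=> rA; exists (fun i => rtile A (clique_vec i)); split; [|split].
- by move=> i; exists (clique_vec i).
- by move=> i j /eqP ij /rtile_inj /(rcorner_clique_vec_inj rA).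
- move=> i j _; apply: rtile_adjacent => k.
  have /andP[? ?] := rcorner_clique_vec_bnd rA i k.
  have /andP[? ?] := rcorner_clique_vec_bnd rA j k.
  by rewrite ler_norml; apply/andP; split; lra.
Qed.
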